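(* Let $V_0\le V$ be finite-dimensional vector spaces, $E=(E,q)$ a formed space and $U\in\mathcal{P}^\omega(E)$. The actions of $\operatorname{GL}(V)$ on $\mathcal{P}(V)$, of $A^T(V,V_0)$ on $\mathcal{P}(V,V_0)$, of $G(E)$ on $\mathcal{P}^\omega(E)$, and of $A(E,U)$ on $\mathcal{P}^\omega(E,U)$ are all transitive on the elements of any given dimension.
   Context: $\mathcal{P}(V)$ is the poset of subspaces $0<W<V$; $\mathcal{P}(V,V_0)$ the poset of $W<V$ with $W+V_0=V$; $A^T(V,V_0)=\{g\in\operatorname{GL}(V): g(v)-v\in V_0\ \forall v\}$. Formed spaces over a field with involution $\sigma$ ($\bar c=\sigma(c)$), $\varepsilon$ ($\varepsilon\bar\varepsilon=1$), $\Lambda$ ($\{c-\varepsilon\bar c\}\le\Lambda\le\{c:c+\varepsilon\bar c=0\}$): forms are sesquilinear maps modulo those $f$ with $f(v,v)\in\Lambda$, $f(w,v)=-\varepsilon\overline{f(v,w)}$; $\omega_q(v,w)=q(v,w)+\varepsilon\overline{q(w,v)}$, $Q_q(v)=q(v,v)+\Lambda$; radical $R(E)=\{v:\omega_q(E,v)=0,Q_q(v)=0\}$; $U^\perp=\{v:\omega_q(v,U)=0\}$; isotropic means $\omega_q,Q_q$ vanish. $\mathcal{P}^\omega(E)$: isotropic $W$ with $R(E)<W<E$; $\mathcal{P}^\omega(E,U)$: those with also $W+U^\perp=E$. $G(E)$ is the group of bijective isometries, $A(E,U)$ its subgroup fixing $U$ pointwise. *)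

From HB Require Import structures.
From mathcomp Require Import all_boot all_order all_algebra.
Set Implicit Arguments. Unset Strict Implicit. Unset Printing Implicit Defensive.
Import GRing.Theory.
Local Open Scope ring_scope.

Section Defs.
Variable K : fieldType.

Section Linear.
Variable V : vectType K.

Definition GLmem (g : 'End(V)) : Prop := bijective g.

Definition PV (W : {vspace V}) : Prop := W != 0%VS /\ W != fullv.

Definition PVV0 (V0 W : {vspace V}) : Prop :=
  W != fullv /\ (W + V0)%VS = fullv.

Definition ATmem (V0 : {vspace V}) (g : 'End(V)) : Prop :=
  GLmem g /\ forall v : V, g v - v \in V0.
End Linear.

Section Formed.
Variables (sigma : {rmorphism K -> K}) (eps : K) (Lam : K -> Prop).

Definition form_param : Prop :=
  [/\ involutive sigma,
      eps * sigma eps = 1,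
      (Lam 0 /\ forall a b, Lam a -> Lam b -> Lam (a - b)),
      ((forall c, Lam (c - eps * sigma c)) /\
       (forall c, Lam c -> c + eps * sigma c = 0))
    & (forall a c, Lam c -> Lam (a * c * sigma a))].

Variable E : vectType K.

Definition sesquilinear (f : E -> E -> K) : Prop :=
  (forall a v v' w, f (a *: v + v') w = a * f v w + f v' w) /\
  (forall a v w w', f v (a *: w + w') = f v w * sigma a + f v w').

(* forms are sesquilinear maps modulo the trivial ones *)
Definition trivial_form (f : E -> E -> K) : Prop :=
  (forall v, Lam (f v v)) /\ (forall v w, f w v = - eps * sigma (f v w)).

Variable q : E -> E -> K.

Definition omega (v w : E) : K := q v w + eps * sigma (q w v).

(* Q_q(v) = 0 in K / Lam *)
Definition Qzero (v : E) : Prop := Lam (q v v).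

Definition in_rad (v : E) : Prop := (forall e, omega e v = 0) /\ Qzero v.

Definition in_perp (U : {vspace E}) (v : E) : Prop :=
  forall u, u \in U -> omega v u = 0.

Definition isotropic (W : {vspace E}) : Prop :=
  (forall v w, v \in W -> w \in W -> omega v w = 0) /\
  (forall v, v \in W -> Qzero v).

Definition Pw (W : {vspace E}) : Prop :=
  [/\ isotropic W,
      (forall v, in_rad v -> v \in W),
      (exists2 w, w \in W & ~ in_rad w)
    & W != fullv].

Definition PwU (U W : {vspace E}) : Prop :=
  Pw W /\ forall e : E, exists w u, [/\ w \in W, in_perp U u & e = w + u].

(* g is an isometry of (E,q): g^* q and q define the same form *)
Definition isometry (g : 'End(E)) : Prop :=
  trivial_form (fun v w => q (g v) (g w) - q v w).

Definition Gmem (g : 'End(E)) : Prop := bijective g /\ isometry g.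

Definition AEUmem (U : {vspace E}) (g : 'End(E)) : Prop :=
  Gmem g /\ forall u, u \in U -> g u = u.
End Formed.
End Defs.

(* For GL(V) and A^T(V, V0): bases of W1 and W2, completed to bases of V, have the same size,
   and the linear map sending one onto the other carries W1 onto W2.  For A^T(V, V0) the part
   of W1 outside V0 is sent to W2 by the projection onto W2 along V0, which moves every vector
   by an element of V0, and V0 is mapped to itself.

   For the formed spaces this is Witt's argument, with Y = 0, resp. Y = U.  Write
   W = F + (W ∩ rad ω) where the frame F meets Y + rad ω trivially; as W + Y^⊥ = E, the frames
   of W1 and W2 can be chosen congruent modulo Y^⊥, so that ω takes the same values on them
   against Y.  The frame of W1 is then moved onto that of W2 one vector at a time, by isometries
   fixing Y, the common part W1 ∩ rad ω = W2 ∩ rad ω and the vectors already placed.  One step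
   x ↦ y is a reflection along y - x when ω(x, y) ≠ 0; otherwise it goes through a singular
   x + z with ω(x, z), ω(z, y) ≠ 0, or is an Eichler transformation. *)

From Pilot Require Import Defs.
From HB Require Import structures.
From mathcomp Require Import all_boot all_order all_algebra.
From mathcomp Require Import ring zify.
Set Implicit Arguments. Unset Strict Implicit. Unset Printing Implicit Defensive.
Import GRing.Theory.
Local Open Scope ring_scope.

Lemma eq_map_cat (aT : Type) (rT : eqType) (f : aT -> rT) (X1 X2 : seq aT) (T1 T2 : seq rT) :
  size X1 = size T1 -> map f (X1 ++ X2) = T1 ++ T2 -> map f X1 = T1 /\ map f X2 = T2.
Proof.
by move=> sX /eqP; rewrite map_cat eqseq_cat ?size_map // => /andP [/eqP -> /eqP ->].
Qed.

(** * Linear groups *)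

Section LinearTransitivity.
Variables (K : fieldType) (V : vectType K).
Implicit Types (W P : {vspace V}) (X Y : seq V).

Lemma lker0_bij (f : 'End(V)) : lker f == 0%VS -> bijective f.
Proof. by move=> kf; exists (f^-1)%VF; [exact: lker0_lfunK | exact: lker0_lfunVK]. Qed.

Lemma lfun_eq0_bij (f : 'End(V)) : (forall v, f v = 0 -> v = 0) -> bijective f.
Proof.
move=> f0; apply/lker0_bij/eqP/vspaceP => v; rewrite memv_ker memv0.
by apply/eqP/eqP => [/f0 | ->] //; apply: linear0.
Qed.

Lemma basis_lfun_bij X Y : basis_of fullv X -> basis_of fullv Y -> size X = size Y ->
  exists2 g : 'End(V), bijective g & map g X = Y.
Proof.
move=> bX bY sXY; have [f fXY] := linear_of_free X Y.
have gX : map (linfun f) X = Y.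
  rewrite -fXY ?(basis_free bX) ?sXY //; apply: eq_map => v; exact: lfunE.
exists (linfun f) => //; apply: lker0_bij.
have img : limg (linfun f) = fullv.
  by rewrite -{1}(span_basis bX) limg_span gX (span_basis bY).
have := limg_ker_dim (linfun f) fullv; rewrite capfv img => /eqP.
by rewrite -{2}[\dim fullv]add0n eqn_add2r dimv_eq0.
Qed.

Lemma lfun_subr_mem (f : 'End(V)) X P : basis_of fullv X ->
  {in X, forall x, f x - x \in P} -> forall v, f v - v \in P.
Proof.
move=> bX fX v; have : (f - \1)%VF v \in limg (f - \1)%VF by apply: memv_img; apply: memvf.
rewrite add_lfunE opp_lfunE id_lfunE; apply: subvP.
rewrite -(span_basis bX) limg_span; apply/span_subvP => _ /mapP [x Xx ->].
by rewrite add_lfunE opp_lfunE id_lfunE fX.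
Qed.

Lemma basis_compl W : basis_of fullv (vbasis W ++ vbasis W^C).
Proof.
rewrite -(addv_complf W); apply: cat_basis; try exact: vbasisP.
exact/directv_addP/capv_compl.
Qed.

Lemma GL_transitive W1 W2 : \dim W1 = \dim W2 ->
  exists g : 'End(V), GLmem g /\ (g @: W1)%VS = W2.
Proof.
move=> dW; have [|g bij_g] := basis_lfun_bij (basis_compl W1) (basis_compl W2).
  by rewrite !size_cat !size_tuple !dimv_compl dW.
case/eq_map_cat; first by rewrite !size_tuple.
move=> gW _; exists g; split => //.
by rewrite -(span_basis (vbasisP W1)) limg_span gW (span_basis (vbasisP W2)).
Qed.

Section Supplement.
Variable P : {vspace V}.

Lemma dimv_diffv_full W : (W + P)%VS = fullv -> \dim (W :\: P) = (\dim {:V} - \dim P)%N.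
Proof. by move=> WP; have := dimv_cap_compl W P; have := dimv_sum_cap W P; rewrite WP; lia. Qed.

Lemma addv_pi1_subr W v : (W + P)%VS = fullv -> v - addv_pi1 W P v \in P.
Proof.
move=> WP; rewrite -{1}(@addv_pi1_pi2 _ _ W P v) ?WP ?memvf //.
by rewrite addrAC subrr add0r memv_pi2.
Qed.

Lemma capv_diff_lker_addv_pi1 W1 W2 : (W2 + P)%VS = fullv ->
  ((W1 :\: P) :&: lker (addv_pi1 W2 P) = 0)%VS.
Proof.
move=> W2P; apply/eqP; rewrite -subv0 -(capv_diff W1 P); apply: capvS => //.
apply/subvP => v; rewrite memv_ker => /eqP pv0.
by have := addv_pi1_subr v W2P; rewrite pv0 subr0.
Qed.

Lemma limg_addv_pi1 W1 W2 : (W1 + P)%VS = fullv -> (W2 + P)%VS = fullv ->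
  (addv_pi1 W2 P @: (W1 :\: P))%VS = (W2 :\: P)%VS.
Proof.
move=> W1P W2P; apply/eqP; rewrite eqEdim; apply/andP; split.
  by apply/subvP => _ /memv_imgP [v _ ->]; apply: memv_pi.
by rewrite limg_dim_eq ?capv_diff_lker_addv_pi1 ?dimv_diffv_full.
Qed.

Lemma basis_of_addv_pi1 W1 W2 : (W1 + P)%VS = fullv -> (W2 + P)%VS = fullv ->
  basis_of (W2 :\: P) (map (addv_pi1 W2 P) (vbasis (W1 :\: P))).
Proof.
move=> W1P W2P; rewrite -(limg_addv_pi1 W1P W2P).
by apply: limg_basis_of; [exact: capv_diff_lker_addv_pi1 | exact: vbasisP].
Qed.

Lemma basis_capv_diffv W : basis_of P (vbasis (W :&: P) ++ vbasis (P :\: W)).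
Proof.
rewrite -{1}(addv_diff_cap P W) addvC capvC; apply: cat_basis; try exact: vbasisP.
apply/directv_addP/eqP; rewrite -subv0 -(capv_diff P W); apply/subvP => v.
by rewrite !memv_cap => /andP [/andP [vW _] ->].
Qed.

Lemma basis_full_diffv W X : (W + P)%VS = fullv -> basis_of (W :\: P) X ->
  basis_of fullv (X ++ (vbasis (W :&: P) ++ vbasis (P :\: W))).
Proof.
move=> WP bX; rewrite -WP -addv_diff; apply: cat_basis => //; last exact: basis_capv_diffv.
exact/directv_addP/capv_diff.
Qed.

Lemma AT_transitive W1 W2 : (W1 + P)%VS = fullv -> (W2 + P)%VS = fullv ->
  \dim W1 = \dim W2 -> exists g : 'End(V), ATmem P g /\ (g @: W1)%VS = W2.
Proof.
move=> W1P W2P dW.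
have dA : \dim (W1 :&: P) = \dim (W2 :&: P).
  by have := dimv_sum_cap W1 P; have := dimv_sum_cap W2 P; rewrite W1P W2P dW; lia.
have dB : \dim (P :\: W1) = \dim (P :\: W2).
  by have := dimv_cap_compl P W1; have := dimv_cap_compl P W2; rewrite !(capvC P) dA; lia.
have bC2 := basis_of_addv_pi1 W1P W2P.
have bX := basis_full_diffv W1P (vbasisP _).
have [|g bij_g] := basis_lfun_bij bX (basis_full_diffv W2P bC2).
  by rewrite !size_cat size_map !size_tuple dA dB.
case/eq_map_cat; first by rewrite size_map.
move=> gC gAB; have [|gA _] := eq_map_cat _ gAB; first by rewrite !size_tuple dA.
exists g; split.
  split => //; apply: lfun_subr_mem bX _ => x; rewrite mem_cat => /orP [xC | xP].
    rewrite (iffRL (eq_in_map _ _ _) gC x xC) -opprB memvN; exact: addv_pi1_subr.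
  apply: memvB; last exact: basis_mem (basis_capv_diffv W1) xP.
  by apply: basis_mem (basis_capv_diffv W2) _; rewrite -gAB map_f.
rewrite -(addv_diff_cap W1 P) limgD -(span_basis (vbasisP (W1 :\: P))).
rewrite -(span_basis (vbasisP (W1 :&: P))) !limg_span gC gA.
by rewrite (span_basis bC2) (span_basis (vbasisP _)) addv_diff_cap.
Qed.

End Supplement.
End LinearTransitivity.

(** * Formed spaces *)

Section FormedSpace.
Variables (K : fieldType) (sigma : {rmorphism K -> K}) (eps : K) (Lam : K -> Prop).
Hypothesis fp : form_param sigma eps Lam.
Variables (E : vectType K) (q : E -> E -> K).
Hypothesis sq : sesquilinear sigma q.
Implicit Types (U W Y : {vspace E}) (g h : 'End(E)).

Local Notation om := (omega sigma eps q).
Local Notation isometry := (Defs.isometry sigma eps Lam q).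
Local Notation isotropic := (Defs.isotropic sigma eps Lam q).
Local Notation Gmem := (Defs.Gmem sigma eps Lam q).

Lemma sigmaK : involutive sigma. Proof. by case: fp. Qed.
Lemma eps_sigma : eps * sigma eps = 1. Proof. by case: fp. Qed.

Lemma eps_neq0 : eps != 0.
Proof. by apply: contra_eq_neq eps_sigma => ->; rewrite mul0r eq_sym oner_neq0. Qed.

Lemma sigma_eps : sigma eps = eps^-1.
Proof. by apply: (mulfI eps_neq0); rewrite eps_sigma mulfV ?eps_neq0. Qed.

Lemma Lam0 : Lam 0. Proof. by case: fp => _ _ []. Qed.
Lemma LamB a b : Lam a -> Lam b -> Lam (a - b).
Proof. by case: fp => _ _ [_ LamB] _ _; apply: LamB. Qed.
Lemma LamN a : Lam a -> Lam (- a). Proof. by rewrite -sub0r; apply/LamB/Lam0. Qed.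
Lemma LamD a b : Lam a -> Lam b -> Lam (a + b).
Proof. by move=> La Lb; rewrite -[b]opprK; apply/LamB/LamN. Qed.
Lemma Lam_trace c : Lam (c - eps * sigma c). Proof. by case: fp => _ _ _ [Lam_tr _] _. Qed.
Lemma Lam_skew c : Lam c -> c + eps * sigma c = 0.
Proof. by case: fp => _ _ _ [_ Lam_sk] _; apply: Lam_sk. Qed.
Lemma Lam_conj a c : Lam c -> Lam (a * c * sigma a).
Proof. by case: fp => _ _ _ _ Lam_c; apply: Lam_c. Qed.
Lemma Lam_eq a b : a = b -> Lam a -> Lam b. Proof. by move->. Qed.

Lemma q_linl a v v' x : q (a *: v + v') x = a * q v x + q v' x. Proof. exact: sq.1. Qed.
Lemma q_linr a v x x' : q v (a *: x + x') = q v x * sigma a + q v x'. Proof. exact: sq.2. Qed.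

Lemma q0l x : q 0 x = 0.
Proof. by have := q_linl 1 0 0 x; rewrite scaler0 addr0 mul1r -{1}[q 0 x]addr0 => /addrI. Qed.
Lemma q0r x : q x 0 = 0.
Proof.
by have := q_linr 1 x 0 0; rewrite scaler0 addr0 rmorph1 mulr1 -{1}[q x 0]addr0 => /addrI.
Qed.
Lemma qDl v v' x : q (v + v') x = q v x + q v' x.
Proof. by rewrite -[v]scale1r q_linl mul1r scale1r. Qed.
Lemma qDr v x x' : q v (x + x') = q v x + q v x'.
Proof. by rewrite -[x]scale1r q_linr rmorph1 mulr1 scale1r. Qed.
Lemma qZl a v x : q (a *: v) x = a * q v x. Proof. by rewrite -[_ *: _]addr0 q_linl q0l addr0. Qed.
Lemma qZr a v x : q v (a *: x) = q v x * sigma a.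
Proof. by rewrite -[_ *: _]addr0 q_linr q0r addr0. Qed.
Lemma qNl v x : q (- v) x = - q v x. Proof. by rewrite -scaleN1r qZl mulN1r. Qed.
Lemma qNr v x : q v (- x) = - q v x. Proof. by rewrite -scaleN1r qZr rmorphN1 mulrN1. Qed.
Lemma qBl v v' x : q (v - v') x = q v x - q v' x. Proof. by rewrite qDl qNl. Qed.
Lemma qBr v x x' : q v (x - x') = q v x - q v x'. Proof. by rewrite qDr qNr. Qed.

Lemma omegaDl v v' x : om (v + v') x = om v x + om v' x.
Proof. by rewrite /omega qDl qDr rmorphD; ring. Qed.
Lemma omegaDr v x x' : om v (x + x') = om v x + om v x'.
Proof. by rewrite /omega qDl qDr rmorphD; ring. Qed.
Lemma omegaZl a v x : om (a *: v) x = a * om v x.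
Proof. by rewrite /omega qZl qZr rmorphM sigmaK; ring. Qed.
Lemma omegaZr a v x : om v (a *: x) = om v x * sigma a.
Proof. by rewrite /omega qZl qZr rmorphM; ring. Qed.
Lemma omega0l x : om 0 x = 0. Proof. by rewrite /omega q0l q0r rmorph0; ring. Qed.
Lemma omega0r x : om x 0 = 0. Proof. by rewrite /omega q0l q0r rmorph0; ring. Qed.
Lemma omegaNl v x : om (- v) x = - om v x. Proof. by rewrite -scaleN1r omegaZl mulN1r. Qed.
Lemma omegaNr v x : om v (- x) = - om v x.
Proof. by rewrite -scaleN1r omegaZr rmorphN1 mulrN1. Qed.
Lemma omegaBl v v' x : om (v - v') x = om v x - om v' x. Proof. by rewrite omegaDl omegaNl. Qed.
Lemma omegaBr v x x' : om v (x - x') = om v x - om v x'. Proof. by rewrite omegaDr omegaNr. Qed.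

Lemma omega_suml x I (r : seq I) (P : pred I) (F : I -> E) :
  om (\sum_(i <- r | P i) F i) x = \sum_(i <- r | P i) om (F i) x.
Proof. exact: (big_morph (om^~ x) (fun v v' => omegaDl v v' x) (omega0l x)). Qed.
Lemma omega_sumr v I (r : seq I) (P : pred I) (F : I -> E) :
  om v (\sum_(i <- r | P i) F i) = \sum_(i <- r | P i) om v (F i).
Proof. exact: (big_morph (om v) (omegaDr v) (omega0r v)). Qed.

Lemma omegaC v x : om v x = eps * sigma (om x v).
Proof. by rewrite /omega rmorphD rmorphM sigmaK mulrDr mulrA eps_sigma mul1r addrC. Qed.

Lemma sigma_omega v x : sigma (om v x) = eps^-1 * om x v.
Proof. by rewrite (omegaC x v) mulKf ?eps_neq0. Qed.

Lemma omega_eq0C v x : om v x = 0 -> om x v = 0.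
Proof. by move=> vx0; rewrite omegaC vx0 rmorph0 mulr0. Qed.

Lemma omega_neq0C v x : om v x != 0 -> om x v != 0.
Proof. by apply: contra_neq; apply: omega_eq0C. Qed.

Lemma Lam_polar v x : Lam (q v x + q x v - om v x).
Proof. by apply: Lam_eq (Lam_trace (q x v)); rewrite /omega; ring. Qed.

Lemma omega_self_eq0 v : Lam (q v v) -> om v v = 0.
Proof. exact: Lam_skew. Qed.

Lemma isometryP (g : 'End(E)) :
  (forall v x, om (g v) (g x) = om v x) -> (forall v, Lam (q (g v) (g v) - q v v)) ->
  isometry g.
Proof.
move=> g_om g_q; split => // v x; have /eqP := g_om x v.
rewrite /omega -subr_eq0 => /eqP om0; apply/eqP; rewrite -subr_eq0 rmorphB -om0; apply/eqP; ring.
Qed.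

Lemma isometry_omega (g : 'End(E)) : isometry g -> forall v x, om (g v) (g x) = om v x.
Proof.
case=> _ g_q v x; apply/eqP; rewrite -subr_eq0 /omega.
have -> : q (g v) (g x) + eps * sigma (q (g x) (g v)) - (q v x + eps * sigma (q x v)) =
          (q (g v) (g x) - q v x) + eps * sigma (q (g x) (g v) - q x v) by rewrite rmorphB; ring.
by rewrite g_q; apply/eqP; ring.
Qed.

Definition orth_row (S : seq E) (v : E) : 'rV[K]_(size S) := \row_(i < size S) om v S`_i.

Lemma orth_row_linear S : linear (orth_row S).
Proof. by move=> a u v; apply/rowP => i; rewrite !mxE omegaDl omegaZl. Qed.

HB.instance Definition _ S :=
  GRing.isLinear.Build K E 'rV_(size S) _ (orth_row S) (orth_row_linear S).

Definition orthv (U : {vspace E}) : {vspace E} := lker (linfun (orth_row (vbasis U))).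

Lemma orthvP U v : reflect (in_perp sigma eps q U v) (v \in orthv U).
Proof.
apply: (iffP idP) => [|vU].
  rewrite memv_ker lfunE => /eqP v0.
  have vS s : s \in vbasis U -> om v s = 0.
    by case/(nthP 0) => i ltiS <-; move/rowP/(_ (Ordinal ltiS)): v0; rewrite !mxE.
  move=> u /coord_vbasis ->; rewrite omega_sumr big1 // => i _.
  by rewrite omegaZr vS ?mul0r // mem_nth ?size_tuple.
rewrite memv_ker lfunE; apply/eqP/rowP => i; rewrite !mxE.
by apply: vU; apply/vbasis_mem/mem_nth.
Qed.

(* The radical of [om] alone; the radical R(E) also asks for Q = 0. *)
Definition radv : {vspace E} := orthv fullv.

Lemma radvP v : reflect (forall e, om v e = 0) (v \in radv).
Proof. by apply: (iffP (orthvP _ _)) => v0 e //; apply: v0; rewrite memvf. Qed.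

Lemma radvPl v : reflect (forall e, om e v = 0) (v \in radv).
Proof. by apply: (iffP (radvP v)) => v0 e; apply: omega_eq0C. Qed.

Lemma mem_addv_radv U x : (forall v, v \in orthv U -> om v x = 0) -> x \in (U + radv)%VS.
Proof.
(* om (-) x vanishes on orthv U = ker F, so it factors through F and is om (-) y with y in U. *)
move=> xU; set S := vbasis U; set F := linfun (orth_row S).
pose lam r := om ((F^-1)%VF r) x.
have lamF v : om v x = lam (F v).
  have vF : v - (F^-1)%VF (F v) \in orthv U.
    by rewrite memv_ker linearB /= limg_lfunVK ?subrr // memv_img ?memvf.
  by rewrite /lam -[v in LHS](subrK ((F^-1)%VF (F v))) omegaDl xU ?add0r.
pose c i := lam (delta_mx 0 i).
have lamE r : lam r = \sum_i r 0 i * c i.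
  rewrite /lam {1}[r]row_sum_delta linear_sum omega_suml; apply: eq_bigr => i _.
  by rewrite linearZ omegaZl.
pose y := \sum_(i < size S) sigma (c i) *: S`_i.
have yU : y \in U by apply: memv_suml => i _; apply/memvZ/vbasis_mem/mem_nth.
have xy : x - y \in radv.
  apply/radvPl => v; rewrite omegaBr lamF lamE omega_sumr; apply/eqP; rewrite subr_eq0.
  by apply/eqP/eq_bigr => i _; rewrite omegaZr sigmaK lfunE !mxE.
by rewrite -(subrK y x) addrC memv_add.
Qed.

Lemma exists_orth_nonorth U x : x \notin (U + radv)%VS ->
  exists2 a, a \in orthv U & om a x != 0.
Proof.
move=> xU; have [/hasP [a /vbasis_mem aU ax] | /hasPn ortho] :=
  boolP (has (fun a => om a x != 0) (vbasis (orthv U))); first by exists a.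
case/negP: xU; apply: mem_addv_radv => v /coord_vbasis ->; rewrite omega_suml big1 // => i _.
by rewrite omegaZl (eqP (negPn (ortho _ _))) ?mulr0 // mem_nth ?size_tuple.
Qed.

Lemma Gmem1 : Gmem \1%VF.
Proof.
split; first by apply: lfun_eq0_bij => v; rewrite id_lfunE.
by apply: isometryP => [v x|v]; rewrite !id_lfunE // subrr; apply: Lam0.
Qed.

Lemma Gmem_comp g h : Gmem g -> Gmem h -> Gmem (g \o h)%VF.
Proof.
move=> [bij_g iso_g] [bij_h iso_h]; split.
  by apply: (eq_bij (bij_comp bij_g bij_h)) => v; rewrite comp_lfunE.
apply: isometryP => [v x|v]; rewrite !comp_lfunE; first by rewrite !isometry_omega.
by apply: Lam_eq (LamD (iso_g.1 (h v)) (iso_h.1 v)); ring.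
Qed.

Lemma Gmem_lker0 h : Gmem h -> lker h == 0%VS.
Proof. by case=> /bij_inj /lker0P. Qed.

Lemma limg_radv h : Gmem h -> (h @: radv)%VS = radv.
Proof.
case=> [[h' hK h'K] iso_h]; apply/vspaceP => v; apply/memv_imgP/idP => [[p rad_p ->] | rad_v].
  by apply/radvPl => e; rewrite -(h'K e) isometry_omega //; apply/radvPl.
exists (h' v); last by rewrite h'K.
by apply/radvPl => e; rewrite -(isometry_omega iso_h) h'K; apply/radvPl.
Qed.

Lemma isotropic_subv A B : isotropic A -> (B <= A)%VS -> isotropic B.
Proof.
by case=> omA QA /subvP BA; split => [v w /BA vA /BA wA | v /BA]; [apply: omA | apply: QA].
Qed.

Lemma isotropic_limg h A : Gmem h -> isotropic A -> isotropic (h @: A)%VS.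
Proof.
case=> _ iso_h [omA QA].
split => [_ _ /memv_imgP [v vA ->] /memv_imgP [w wA ->] | _ /memv_imgP [v vA ->]].
  by rewrite isometry_omega ?omA.
by apply: Lam_eq (LamD (iso_h.1 v) (QA v vA)); ring.
Qed.

(** * Reflections and Eichler transformations *)

Definition dyad_fun (a b v : E) := om v a *: b.

Lemma dyad_fun_linear a b : linear (dyad_fun a b).
Proof. by move=> c v x; rewrite /dyad_fun omegaDl omegaZl scalerDl scalerA. Qed.

HB.instance Definition _ a b := GRing.isLinear.Build K E E _ (dyad_fun a b) (dyad_fun_linear a b).

Definition dyad a b : 'End(E) := linfun (dyad_fun a b).

Lemma dyadE a b v : dyad a b v = om v a *: b. Proof. exact: lfunE. Qed.

Lemma omega_selfE u c : Lam (q u u - c) -> om u u = c + eps * sigma c.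
Proof.
by move/Lam_skew; rewrite rmorphB /omega => uu0; apply/eqP; rewrite -subr_eq0 -uu0; apply/eqP; ring.
Qed.

(* An isometry whenever Q(u) = c != 0; for symmetric q and c = q u u it is the reflection in u. *)
Definition reflection u c : 'End(E) := \1%VF - c^-1 *: dyad u u.

Lemma reflectionE u c v : reflection u c v = v - (om v u * c^-1) *: u.
Proof. by rewrite add_lfunE opp_lfunE scale_lfunE id_lfunE dyadE scalerA mulrC. Qed.

Section Reflection.
Variables (u : E) (c : K).
Hypotheses (c_neq0 : c != 0) (Qu : Lam (q u u - c)).

Lemma reflection_bij : bijective (reflection u c).
Proof.
apply: lfun_eq0_bij => v; rewrite reflectionE => /eqP; rewrite subr_eq0 => /eqP v_def.
suff /eqP : om v u * c^-1 * (eps * sigma c) = 0.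
  rewrite !mulf_eq0 invr_eq0 fmorph_eq0 (negbTE c_neq0) (negbTE eps_neq0) !orbF => /eqP vu0.
  by rewrite v_def vu0 mul0r scale0r.
have := congr1 (om^~ u) v_def; rewrite omegaZl (omega_selfE Qu) => vu.
by apply: (addrI (om v u)); rewrite addr0 [in RHS]vu mulrDr mulfVK.
Qed.

Lemma reflection_isometry : isometry (reflection u c).
Proof.
have sc_neq0 : sigma c != 0 by rewrite fmorph_eq0.
apply: isometryP => [v x|v]; rewrite !reflectionE.
  rewrite omegaBl !omegaBr !omegaZl !omegaZr !rmorphM fmorphV (omegaC u x) (omega_selfE Qu).
  by field; rewrite sc_neq0 c_neq0.
set a := om v u * c^-1; have ac : a * c = om v u by rewrite mulfVK.
apply: (Lam_eq _ (LamD (LamN (Lam_trace (a * q u v))) (Lam_conj a Qu))).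
apply/eqP; rewrite -subr_eq0; apply/eqP.
transitivity (sigma a * (om v u - a * c)); last by rewrite ac subrr mulr0.
by rewrite qBl !qBr !qZl !qZr /omega rmorphM; ring.
Qed.

End Reflection.

Definition eichler u c k : 'End(E) := \1%VF + k *: dyad c u - sigma (eps * k) *: dyad u c.

Lemma eichlerE u c k v :
  eichler u c k v = v + (k * om v c) *: u - (sigma (eps * k) * om v u) *: c.
Proof. by rewrite !add_lfunE opp_lfunE !scale_lfunE id_lfunE !dyadE !scalerA. Qed.

Section Eichler.
Variables (u c : E) (k : K).
Hypotheses (Qu : Lam (q u u)) (Qc : Lam (q c c)) (uc0 : om u c = 0).

Let cu0 : om c u = 0. Proof. exact: omega_eq0C. Qed.
Let uu0 : om u u = 0. Proof. exact: omega_self_eq0. Qed.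
Let cc0 : om c c = 0. Proof. exact: omega_self_eq0. Qed.

Lemma eichler_bij : bijective (eichler u c k).
Proof.
apply: lfun_eq0_bij => v; rewrite eichlerE => /eqP; rewrite subr_eq0 => /eqP v_def.
have {}v_def : v = (sigma (eps * k) * om v u) *: c - (k * om v c) *: u by rewrite -v_def addrK.
have vc0 : om v c = 0 by rewrite {1}v_def omegaBl !omegaZl cc0 uc0 !mulr0 subrr.
have vu0 : om v u = 0 by rewrite {1}v_def omegaBl !omegaZl cu0 uu0 !mulr0 subrr.
by rewrite v_def vc0 vu0 !mulr0 !scale0r subrr.
Qed.

Lemma eichler_isometry : isometry (eichler u c k).
Proof.
apply: isometryP => [v x|v]; rewrite !eichlerE.
  rewrite !(omegaDl, omegaBl, omegaDr, omegaBr, omegaNl, omegaNr, omegaZl, omegaZr) uc0 cu0 uu0 cc0.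
  by rewrite !(rmorphM, sigmaK) !sigma_omega sigma_eps; field; rewrite eps_neq0.
set U := (k * om v c) *: u; set C := (sigma (eps * k) * om v u) *: c.
have polar : om U v - om C v - om U C = k * om v c * om u v - eps * sigma (k * om v c * om u v).
  rewrite /U /C !(omegaZl, omegaZr) uc0 !(rmorphM, sigmaK) !sigma_omega sigma_eps.
  by field; rewrite eps_neq0.
have QU : Lam (q U U) by rewrite /U qZl qZr mulrA; apply: Lam_conj.
have QC : Lam (q C C) by rewrite /C qZl qZr mulrA; apply: Lam_conj.
apply: (Lam_eq _ (LamD (LamB (LamD (LamD (LamB (Lam_polar U v) (Lam_polar C v)) QU) QC)
  (Lam_polar U C)) (Lam_trace (k * om v c * om u v)))).
by rewrite -polar !(qDl, qBl, qDr, qBr, qNl, qNr); ring.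
Qed.

End Eichler.

(** * Witt's extension argument *)

Definition fixes (h : 'End(E)) (X0 : {vspace E}) := {in X0, forall x, h x = x}.

Lemma fixes_limg (h : 'End(E)) (Y : {vspace E}) : fixes h Y -> (h @: Y)%VS = Y.
Proof. by move=> fix_h; apply/fixedSpace_limg/fixedSpacesP. Qed.

Definition stab_orbit (X0 : {vspace E}) x y := exists h, [/\ Gmem h, fixes h X0 & h x = y].

Lemma stab_orbit_trans X0 x y z :
  stab_orbit X0 x y -> stab_orbit X0 y z -> stab_orbit X0 x z.
Proof.
case=> [g [Gg fg gx]] [h [Gh fh hy]]; exists (h \o g)%VF; split; first exact: Gmem_comp.
  by move=> x0 X0x0; rewrite comp_lfunE fg ?fh.
by rewrite comp_lfunE gx hy.
Qed.

(* Q(y - x) = - om x y, so the reflection along y - x is defined and sends x to y. *)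
Lemma stab_orbit_reflection (X0 : {vspace E}) x y : Lam (q x x) -> Lam (q y y) ->
  {in X0, forall x0, om x0 x = om x0 y} -> om x y != 0 -> stab_orbit X0 x y.
Proof.
move=> Qx Qy X0xy xy; pose c := - om x y; have c_neq0 : c != 0 by rewrite oppr_eq0.
have Qyx : Lam (q (y - x) (y - x) - c).
  apply: (Lam_eq _ (LamN (LamB (LamB (Lam_trace (q y x)) Qy) Qx))).
  by rewrite /c !(qBl, qBr) /omega; ring.
exists (reflection (y - x) c); split.
- by split; [exact: reflection_bij | exact: reflection_isometry].
- by move=> x0 X0x0; rewrite reflectionE omegaBr X0xy // subrr mul0r scale0r subr0.
rewrite reflectionE omegaBr (omega_self_eq0 Qx) subr0 /c invrN mulrN mulfV //.
by rewrite scaleN1r opprK addrC subrK.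
Qed.

Lemma stab_orbit_via (X0 : {vspace E}) x y z : Lam (q x x) -> Lam (q y y) ->
  {in X0, forall x0, om x0 x = om x0 y} -> om x y = 0 ->
  {in X0, forall x0, om x0 z = 0} -> Lam (q (x + z) (x + z)) ->
  om x z != 0 -> om z y != 0 -> stab_orbit X0 x y.
Proof.
move=> Qx Qy X0xy xy0 X0z Qxz xz zy.
have X0xz x0 : x0 \in X0 -> om x0 (x + z) = om x0 x by move=> X0x0; rewrite omegaDr X0z ?addr0.
apply: (@stab_orbit_trans _ _ (x + z)); apply: stab_orbit_reflection => //.
- by move=> x0 /X0xz ->.
- by rewrite omegaDr (omega_self_eq0 Qx) add0r.
- by move=> x0 X0x0; rewrite X0xz ?X0xy.
- by rewrite omegaDl xy0 add0r.
Qed.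

Section WittOrth.
Variables (X0 : {vspace E}) (x u c : E).
Hypotheses (Qx : Lam (q x x)) (Qu : Lam (q u u)) (xu0 : om x u = 0).
Hypotheses (X0u0 : {in X0, forall x0, om x0 u = 0}) (X0c : {in X0, forall x0, om x0 c = 0}).
Hypotheses (cx : om c x != 0) (cxu : om c (x + u) != 0).

Let xx0 : om x x = 0. Proof. exact: omega_self_eq0. Qed.
Let uu0 : om u u = 0. Proof. exact: omega_self_eq0. Qed.
Let xc : om x c != 0. Proof. exact: omega_neq0C. Qed.

Let Qxu : Lam (q (x + u) (x + u)).
Proof.
apply: (Lam_eq _ (LamD (LamD Qx Qu) (Lam_polar x u))).
by rewrite xu0 !(qDl, qDr); ring.
Qed.

Let xxu0 : om x (x + u) = 0. Proof. by rewrite omegaDr xx0 xu0 addr0. Qed.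

Let X0xxu : {in X0, forall x0, om x0 x = om x0 (x + u)}.
Proof. by move=> x0 X0x0; rewrite omegaDr X0u0 ?addr0. Qed.

Lemma stab_orbit_eichler : om c u = 0 -> q c c = 0 -> stab_orbit X0 x (x + u).
Proof.
move=> cu0 cc0; have Qc : Lam (q c c) by rewrite cc0; apply: Lam0.
exists (eichler u c (om x c)^-1); split.
- by split; [apply: eichler_bij | apply: eichler_isometry] => //; apply: omega_eq0C.
- move=> x0 X0x0; rewrite eichlerE (X0c X0x0) (X0u0 X0x0).
  by rewrite !mulr0 !scale0r addr0 subr0.
- by rewrite eichlerE xu0 mulr0 scale0r subr0 mulVf // scale1r.
Qed.

(* The coefficient of z, here and in the next lemma, solves Q(x + z) = 0. *)
Lemma stab_orbit_line : om c u = 0 -> q c c != 0 -> stab_orbit X0 x (x + u).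
Proof.
move=> cu0 cc; pose s := - om x c / q c c.
have s_neq0 : s != 0 by rewrite mulf_neq0 ?invr_eq0 ?oppr_eq0.
apply: (@stab_orbit_via _ _ _ (s *: c)) => //.
- by move=> x0 X0x0; rewrite omegaZr X0c // mul0r.
- apply: (Lam_eq _ (LamD Qx (Lam_polar x (s *: c)))).
  apply/eqP; rewrite -subr_eq0; apply/eqP.
  transitivity (- (sigma s * (om x c + s * q c c))).
    by rewrite omegaZr !(qDl, qDr, qZl, qZr); ring.
  by rewrite /s divfK // subrr mulr0 oppr0.
- by rewrite omegaZr mulf_neq0 // fmorph_eq0.
- by rewrite omegaZl mulf_neq0.
Qed.

Lemma stab_orbit_plane : om c u != 0 -> stab_orbit X0 x (x + u).
Proof.
move=> cu; pose t := sigma (- (om x c + q c c) / om c u).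
apply: (@stab_orbit_via _ _ _ (c + t *: u)) => //.
- by move=> x0 X0x0; rewrite omegaDr omegaZr X0c // X0u0 // mul0r addr0.
- apply: (Lam_eq _ (LamD (LamD (LamD Qx (Lam_polar x (c + t *: u))) (Lam_polar c (t *: u)))
    (Lam_conj t Qu))).
  apply/eqP; rewrite -subr_eq0; apply/eqP.
  transitivity (- (om x c + q c c + om c u * sigma t)).
    by rewrite !(omegaDr, omegaZr) xu0 !(qDl, qDr, qZl, qZr); ring.
  by rewrite /t sigmaK mulrC divfK // subrr oppr0.
- by rewrite omegaDr omegaZr xu0 mul0r addr0.
- by rewrite !(omegaDl, omegaDr, omegaZl) (omega_eq0C xu0) uu0 !mulr0 !addr0 -omegaDr.
Qed.

Lemma stab_orbit_orth : stab_orbit X0 x (x + u).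
Proof.
have [cu0 | ] := eqVneq (om c u) 0; last exact: stab_orbit_plane.
have [cc0 | ] := eqVneq (q c c) 0; first exact: stab_orbit_eichler.
exact: stab_orbit_line.
Qed.

End WittOrth.

Lemma exists_orth_nonorth2 U x y : x \notin (U + radv)%VS -> y \notin (U + radv)%VS ->
  exists c, [/\ c \in orthv U, om c x != 0 & om c y != 0].
Proof.
move=> xU yU; have [a aU ax] := exists_orth_nonorth xU; have [b bU yb] := exists_orth_nonorth yU.
have [ay0 | ] := eqVneq (om a y) 0; last by exists a.
have [bx0 | ] := eqVneq (om b x) 0; last by exists b.
by exists (a + b); rewrite memvD // !omegaDl ay0 bx0 add0r addr0.
Qed.

Lemma witt_step (X0 : {vspace E}) x y : Lam (q x x) -> Lam (q y y) ->
  {in X0, forall x0, om x0 x = om x0 y} ->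
  x \notin (X0 + radv)%VS -> y \notin (X0 + radv)%VS -> stab_orbit X0 x y.
Proof.
move=> Qx Qy X0xy xX0 yX0.
have [xy0 | ] := eqVneq (om x y) 0; last exact: stab_orbit_reflection.
have [c [/orthvP X0c cx cy]] := exists_orth_nonorth2 xX0 yX0.
have -> : y = x + (y - x) by rewrite addrC subrK.
apply: (@stab_orbit_orth _ _ _ c) => //.
- apply: (Lam_eq _ (LamB (LamD Qy Qx) (Lam_polar y x))).
  by rewrite !(qBl, qBr) (omega_eq0C xy0); ring.
- by rewrite omegaBr xy0 (omega_self_eq0 Qx) subrr.
- by move=> x0 X0x0; rewrite omegaBr X0xy ?subrr.
- by move=> x0 X0x0; apply/omega_eq0C/X0c.
- by rewrite addrC subrK.
Qed.

Lemma free_map_lker0 (h : 'End(E)) (X : seq E) : lker h == 0%VS -> free X -> free (map h X).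
Proof. by move=> /eqP h0; rewrite /free -limg_span size_map limg_dim_eq // h0 capv0. Qed.

Lemma notin_free_cons x X (Z : {vspace E}) :
  free (x :: X) -> (<<x :: X>> :&: Z = 0)%VS -> x \notin Z.
Proof.
move=> fX XZ; apply/negP => xZ.
have : x \in (<<x :: X>> :&: Z)%VS by rewrite memv_cap xZ memv_span ?mem_head.
by rewrite XZ memv0 => /eqP x0; move: fX; rewrite free_cons x0 mem0v.
Qed.

Lemma capv_span_cons x X (Y Z : {vspace E}) :
  free (x :: X) -> (<<x :: X>> :&: (Y + Z) = 0)%VS -> (<<X>> :&: (Y + <[x]> + Z) = 0)%VS.
Proof.
rewrite free_cons => /andP [xX _] XYZ; apply/eqP; rewrite -subv0; apply/subvP => v.
rewrite memv_cap -addvA (addvC <[x]>%VS) addvA.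
case/andP => vX /memv_addP [a aYZ [_ /vlineP [k ->] v_def]].
have aX : a \in <<x :: X>>%VS.
  have -> : a = v - k *: x by rewrite v_def addrK.
  rewrite span_cons; apply: memvB; first exact: (subvP (addvSr _ _)).
  by apply: (subvP (addvSl _ _)); apply/memvZ/memv_line.
have : a \in (<<x :: X>> :&: (Y + Z))%VS by rewrite memv_cap aX.
rewrite XYZ memv0 => /eqP a0; move: vX; rewrite v_def a0 add0r.
have [-> | k_neq0] := eqVneq k 0; first by rewrite scale0r !mem0v.
by move/(memvZ k^-1); rewrite scalerA mulVf // scale1r (negbTE xX).
Qed.

Lemma witt_extend (xs ys : seq E) (Y0 : {vspace E}) : size xs = size ys ->
  isotropic <<xs>> -> isotropic <<ys>> ->
  (forall i, (i < size xs)%N -> {in Y0, forall y0, om y0 xs`_i = om y0 ys`_i}) ->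
  free xs -> (<<xs>> :&: (Y0 + radv) = 0)%VS -> free ys -> (<<ys>> :&: (Y0 + radv) = 0)%VS ->
  exists h, [/\ Gmem h, fixes h Y0 & map h xs = ys].
Proof.
elim: ys xs Y0 => [|y ys IH] [|x xs] Y0 //=.
  by exists \1%VF; split; [exact: Gmem1 | move=> ? _; rewrite id_lfunE |].
case=> size_xy isoX isoY X_Y fX capX fY capY.
have [xX yY] : x \in <<x :: xs>>%VS /\ y \in <<y :: ys>>%VS by rewrite !memv_span ?mem_head.
have [h1 [Gh1 fix_h1 h1x]] := witt_step (isoX.2 x xX) (isoY.2 y yY) (X_Y 0%N isT)
  (notin_free_cons fX capX) (notin_free_cons fY capY).
have subX : (<<xs>> <= <<x :: xs>>)%VS by rewrite span_cons addvSr.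
have subY : (<<ys>> <= <<y :: ys>>)%VS by rewrite span_cons addvSr.
have [h2 [Gh2 fix_h2 h2xs]] :
    exists h, [/\ Gmem h, fixes h (Y0 + <[y]>)%VS & map h (map h1 xs) = ys].
  apply: IH.
  - by rewrite size_map.
  - by rewrite -limg_span; apply: isotropic_limg Gh1 (isotropic_subv isoX subX).
  - exact: isotropic_subv isoY subY.
  - rewrite size_map => i ltix _ /memv_addP [a Y0a [_ /vlineP [k ->] ->]].
    have [xiX yiY] : xs`_i \in <<x :: xs>>%VS /\ ys`_i \in <<y :: ys>>%VS.
      by rewrite !memv_span // inE mem_nth ?orbT // -size_xy.
    rewrite (nth_map 0) // !omegaDl !omegaZl -{1}(fix_h1 a Y0a) -{1}h1x !(isometry_omega Gh1.2).
    by rewrite (isoX.1 x _ xX xiX) (isoY.1 y _ yY yiY) (X_Y i.+1).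
  - by apply: free_map_lker0 (Gmem_lker0 Gh1) _; move: fX; rewrite free_cons => /andP [].
  - rewrite -limg_span -[in RHS](limg0 h1) -(capv_span_cons fX capX).
    by rewrite lker0_img_cap ?Gmem_lker0 // !limgD (fixes_limg fix_h1) limg_line h1x limg_radv.
  - by move: fY; rewrite free_cons => /andP [].
  - exact: capv_span_cons.
exists (h2 \o h1)%VF; split; first exact: Gmem_comp.
  by move=> y0 Y0y0; rewrite comp_lfunE fix_h1 // fix_h2 // (subvP (addvSl _ _)).
rewrite comp_lfunE h1x fix_h2; last exact/(subvP (addvSr _ _))/memv_line.
by rewrite -h2xs -map_comp; congr (_ :: _); apply: eq_map => v; rewrite comp_lfunE.
Qed.

Lemma vbasis_nth_mem (U : {vspace E}) i : (vbasis U)`_i \in U.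
Proof.
have [lt_iU | le_Ui] := ltnP i (size (vbasis U)); first exact/vbasis_mem/mem_nth.
by rewrite nth_default ?mem0v.
Qed.

Section WittCore.
Variable Y : {vspace E}.
Local Notation Yp := (orthv Y).

Lemma radv_sub_orthv : (radv <= Yp)%VS.
Proof. by apply/subvP => v /radvP rad_v; apply/orthvP => u _; apply: rad_v. Qed.

Lemma capv_orthv_radv (W : {vspace E}) : (W :&: Yp :&: radv = W :&: radv)%VS.
Proof. by rewrite -capvA (capv_idPr radv_sub_orthv). Qed.

Lemma isotropic_cap_sub_radv W : isotropic W -> (W + Yp)%VS = fullv ->
  (W :&: (Y + radv) <= radv)%VS.
Proof.
case=> omW _ WY; apply/subvP => v; rewrite memv_cap => /andP [vW /memv_addP [y Yy [p rad_p v_def]]].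
suff rad_y : y \in radv by rewrite v_def memvD.
apply/radvPl => e; have /memv_addP [w wW [z zY ->]] : e \in (W + Yp)%VS by rewrite WY memvf.
rewrite omegaDl (elimT (orthvP Y z) zY y Yy) addr0.
have -> : y = v - p by rewrite v_def addrK.
by rewrite omegaBr omW // (radvPl _ rad_p) subrr.
Qed.

Definition witt_frame (W : {vspace E}) (L : seq E) : seq E := L ++ vbasis ((W :&: Yp) :\: radv).

Lemma witt_frameP W L : isotropic W -> (W + Yp)%VS = fullv -> basis_of (W :\: Yp) L ->
  [/\ free (witt_frame W L), (<<witt_frame W L>> :&: (Y + radv) = 0)%VS
    & (<<witt_frame W L>> + W :&: radv)%VS = W].
Proof.
move=> isoW WY bL; have bK := vbasisP ((W :&: Yp) :\: radv).
have KpYp : ((W :&: Yp) :\: radv <= Yp)%VS by exact: subv_trans (diffvSl _ _) (capvSr _ _).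
have -> : <<witt_frame W L>>%VS = (W :\: Yp + ((W :&: Yp) :\: radv))%VS.
  by rewrite /witt_frame span_cat (span_basis bL) (span_basis bK).
split.
- rewrite cat_free (basis_free bL) (basis_free bK) (span_basis bL) (span_basis bK).
  by apply/directv_addP/eqP; rewrite -subv0 -(capv_diff W Yp) capvS.
- apply/eqP; rewrite -subv0; apply/subvP => v; rewrite memv_cap => /andP [vMK vYr].
  have rad_v : v \in radv.
    apply: (subvP (isotropic_cap_sub_radv isoW WY)); rewrite memv_cap vYr andbT.
    by apply: subvP vMK; rewrite subv_add diffvSl (subv_trans (diffvSl _ _) (capvSl _ _)).
  have /memv_addP [m mM [k kK v_def]] := vMK.
  have m0 : m = 0.
    apply/eqP; rewrite -memv0 -(capv_diff W Yp) memv_cap mM.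
    have -> : m = v - k by rewrite v_def addrK.
    by apply: memvB; [exact: (subvP radv_sub_orthv) | exact: (subvP KpYp)].
  by rewrite -(capv_diff (W :&: Yp) radv) memv_cap rad_v andbT v_def m0 add0r.
- by rewrite -addvA -capv_orthv_radv !addv_diff_cap.
Qed.

Theorem witt_transitive W1 W2 : isotropic W1 -> isotropic W2 -> \dim W1 = \dim W2 ->
  (W1 :&: radv = W2 :&: radv)%VS -> (W1 + Yp)%VS = fullv -> (W2 + Yp)%VS = fullv ->
  exists h, [/\ Gmem h, fixes h Y & (h @: W1)%VS = W2].
Proof.
move=> isoW1 isoW2 dW R12 W1Y W2Y.
set L1 := vbasis (W1 :\: Yp); set L2 := map (addv_pi1 W2 Yp) L1.
have [free1 cap1 span1] := witt_frameP isoW1 W1Y (vbasisP _).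
have [free2 cap2 span2] := witt_frameP isoW2 W2Y (basis_of_addv_pi1 W1Y W2Y).
have frame_subr i : (witt_frame W1 L1)`_i - (witt_frame W2 L2)`_i \in Yp.
  rewrite !nth_cat size_map; case: ltnP => iL; first by rewrite (nth_map 0) ?addv_pi1_subr.
  by apply: memvB; apply: (subvP (subv_trans (diffvSl _ _) (capvSr _ _))); apply: vbasis_nth_mem.
have [h [Gh fix_h hF]] : exists h, [/\ Gmem h, fixes h (Y + W1 :&: radv)%VS
                                     & map h (witt_frame W1 L1) = witt_frame W2 L2].
  apply: witt_extend; rewrite -?addvA ?(addv_idPr (capvSr _ _)) //.
  - rewrite !size_cat size_map !size_tuple; congr (_ + _)%N.
    have := dimv_cap_compl (W1 :&: Yp) radv; have := dimv_cap_compl (W2 :&: Yp) radv.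
    have := dimv_sum_cap W1 Yp; have := dimv_sum_cap W2 Yp.
    by rewrite W1Y W2Y !capv_orthv_radv R12 dW; lia.
  - by apply: (isotropic_subv isoW1); rewrite -[X in (_ <= X)%VS]span1 addvSl.
  - by apply: (isotropic_subv isoW2); rewrite -[X in (_ <= X)%VS]span2 addvSl.
  move=> i _ _ /memv_addP [y Yy [r /memv_capP [_ rad_r] ->]].
  apply/eqP; rewrite !omegaDl !(radvP _ rad_r) !addr0 -subr_eq0 -omegaBr; apply/eqP.
  exact/omega_eq0C/(elimT (orthvP Y _) (frame_subr i)).
have fix_R : fixes h (W1 :&: radv) by move=> r rR; apply: fix_h; rewrite (subvP (addvSr _ _)).
exists h; split => //; first by move=> y Yy; apply: fix_h; rewrite (subvP (addvSl _ _)).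
by rewrite -span1 limgD limg_span hF (fixes_limg fix_R) R12 span2.
Qed.

End WittCore.

Lemma orthv0 : orthv 0 = fullv.
Proof.
by apply/vspaceP => v; rewrite memvf; apply/orthvP => u; rewrite memv0 => /eqP ->; apply: omega0r.
Qed.

Lemma addv_orthv_full U W :
  (forall e, exists w u, [/\ w \in W, in_perp sigma eps q U u & e = w + u]) ->
  (W + orthv U)%VS = fullv.
Proof.
move=> WU; apply/vspaceP => e; rewrite memvf; have [w [u [wW /orthvP uU ->]]] := WU e.
exact: memv_add.
Qed.

Lemma capv_radv_eq W1 W2 : isotropic W1 -> isotropic W2 ->
  (forall v, in_rad sigma eps Lam q v -> v \in W1) ->
  (forall v, in_rad sigma eps Lam q v -> v \in W2) -> (W1 :&: radv = W2 :&: radv)%VS.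
Proof.
have rad_of W v : isotropic W -> v \in W -> v \in radv -> in_rad sigma eps Lam q v.
  by move=> [_ QW] vW /radvPl rad_v; split; [exact: rad_v | exact: QW].
move=> isoW1 isoW2 R1 R2; apply/vspaceP => v; rewrite !memv_cap.
by apply/andP/andP => -[vW rad_v]; split => //; [apply/R2/(rad_of W1) | apply/R1/(rad_of W2)].
Qed.

Lemma Gmem_transitive W1 W2 : Pw sigma eps Lam q W1 -> Pw sigma eps Lam q W2 ->
  \dim W1 = \dim W2 -> exists g, Gmem g /\ (g @: W1)%VS = W2.
Proof.
case=> isoW1 R1 _ _ [isoW2 R2 _ _] dW.
have full W : (W + orthv 0)%VS = fullv by rewrite orthv0 addvf.
have [h [Gh _ hW]] :=
  witt_transitive isoW1 isoW2 dW (capv_radv_eq isoW1 isoW2 R1 R2) (full W1) (full W2).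
by exists h.
Qed.

Lemma AEUmem_transitive U W1 W2 : PwU sigma eps Lam q U W1 -> PwU sigma eps Lam q U W2 ->
  \dim W1 = \dim W2 -> exists g, AEUmem sigma eps Lam q U g /\ (g @: W1)%VS = W2.
Proof.
case=> [[isoW1 R1 _ _] /addv_orthv_full W1U] [[isoW2 R2 _ _] /addv_orthv_full W2U] dW.
have [h [Gh fix_h hW]] :=
  witt_transitive isoW1 isoW2 dW (capv_radv_eq isoW1 isoW2 R1 R2) W1U W2U.
by exists h.
Qed.

End FormedSpace.

Theorem proposition5p4 (K : fieldType) :
  (* GL(V) on P(V) *)
  (forall (V : vectType K) (W1 W2 : {vspace V}),
     PV W1 -> PV W2 -> \dim W1 = \dim W2 ->
     exists g : 'End(V), GLmem g /\ (g @: W1)%VS = W2) /\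
  (* A^T(V,V0) on P(V,V0) *)
  (forall (V : vectType K) (V0 W1 W2 : {vspace V}),
     PVV0 V0 W1 -> PVV0 V0 W2 -> \dim W1 = \dim W2 ->
     exists g : 'End(V), ATmem V0 g /\ (g @: W1)%VS = W2) /\
  (* G(E) on P^omega(E) *)
  (forall (sigma : {rmorphism K -> K}) (eps : K) (Lam : K -> Prop)
          (E : vectType K) (q : E -> E -> K) (W1 W2 : {vspace E}),
     form_param sigma eps Lam -> sesquilinear sigma q ->
     Pw sigma eps Lam q W1 -> Pw sigma eps Lam q W2 -> \dim W1 = \dim W2 ->
     exists g : 'End(E), Gmem sigma eps Lam q g /\ (g @: W1)%VS = W2) /\
  (* A(E,U) on P^omega(E,U), for U in P^omega(E) *)
  (forall (sigma : {rmorphism K -> K}) (eps : K) (Lam : K -> Prop)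
          (E : vectType K) (q : E -> E -> K) (U W1 W2 : {vspace E}),
     form_param sigma eps Lam -> sesquilinear sigma q ->
     Pw sigma eps Lam q U ->
     PwU sigma eps Lam q U W1 -> PwU sigma eps Lam q U W2 -> \dim W1 = \dim W2 ->
     exists g : 'End(E), AEUmem sigma eps Lam q U g /\ (g @: W1)%VS = W2).
Proof.
split; first by move=> V W1 W2 _ _; apply: GL_transitive.
split; first by move=> V V0 W1 W2 [_ W1V0] [_ W2V0]; apply: AT_transitive.
split; first by move=> sigma eps Lam E q W1 W2 fp sq; apply: Gmem_transitive.
by move=> sigma eps Lam E q U W1 W2 fp sq _; apply: AEUmem_transitive.
Qed.
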